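(* Let $(x_n)_{n\ge1}$ be a real sequence and $(L_m)_{m\ge1}$ pairwise distinct elements of $[-\infty,+\infty]$ with $\sum_{m=1}^\infty i(x_n;L_m)=1$. Then for every $L\in\mathbb R$ different from all $L_m$, one has $i(x_n;L)=0$, and every subsequence $(x_{k(n)})_{n\ge1}$ converging to $L$ satisfies $\delta_-(\{k(n)\mid n\in\mathbb N\})=0$.
   Context: Let $\mathbb N=\{1,2,\dots\}$. For $K\subseteq\mathbb N$, $\delta_-(K)=\liminf_{n\to\infty}\frac{|K\cap\{1,\dots,n\}|}{n}$, $\delta_+(K)=\limsup_{n\to\infty}\frac{|K\cap\{1,\dots,n\}|}{n}$. For $L\in\mathbb R$: $i(x_n;L)=1-\sup_{\varepsilon>0}\delta_+(\{n\mid |x_n-L|\ge\varepsilon\})$; $i(x_n;+\infty)=1-\sup_{M\in\mathbb R}\delta_+(\{n\mid x_n\le M\})$; $i(x_n;-\infty)=1-\sup_{M\in\mathbb R}\delta_+(\{n\mid x_n\ge M\})$. *)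

From Stdlib Require Import Reals Lra Lia Classical ClassicalEpsilon.
Open Scope R_scope.

(* Sets K ⊆ ℕ = {1,2,...} are predicates on nat; index 0 is ignored. *)

Fixpoint count (K : nat -> Prop) (n : nat) : nat :=
  match n with
  | O => O
  | S m => (count K m + if excluded_middle_informative (K (S m)) then 1 else 0)%nat
  end.

Definition ratio (K : nat -> Prop) (n : nat) : R := INR (count K n) / INR n.

(* supremum of a nonempty bounded-above set of reals (0 by convention otherwise) *)
Definition Rsup (E : R -> Prop) : R :=
  match excluded_middle_informative (bound E /\ exists x, E x) with
  | left H => proj1_sig (completeness E (proj1 H) (proj2 H))
  | right _ => 0
  end.

Definition Rinf (E : R -> Prop) : R := - Rsup (fun y => E (- y)).

Definition limsup (u : nat -> R) : R :=
  Rinf (fun a => exists N : nat, a = Rsup (fun y => exists n, (n >= N)%nat /\ y = u n)).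

Definition liminf (u : nat -> R) : R := - limsup (fun n => - u n).

Definition delta_plus (K : nat -> Prop) : R := limsup (ratio K).
Definition delta_minus (K : nat -> Prop) : R := liminf (ratio K).

Inductive ExtR : Type :=
  | Fin : R -> ExtR
  | PInf : ExtR
  | MInf : ExtR.

Definition idx (x : nat -> R) (L : ExtR) : R :=
  match L with
  | Fin l => 1 - Rsup (fun d => exists eps, eps > 0 /\
                        d = delta_plus (fun n => Rabs (x n - l) >= eps))
  | PInf => 1 - Rsup (fun d => exists M : R, d = delta_plus (fun n => x n <= M))
  | MInf => 1 - Rsup (fun d => exists M : R, d = delta_plus (fun n => x n >= M))
  end.

From Stdlib Require Import Reals Lra Lia Classical ClassicalEpsilon.
Open Scope R_scope.

(* Choose a precision [p] so fine that the [p]-neighbourhoods of [l] and of [L 1], ..., [L M] are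
   pairwise disjoint.  The indices [n] with [x n] near [L m] have lower density at least
   [i(x_n; L m)], and these disjoint index sets, together with the indices near [l] (or the index
   set of a subsequence converging to [l], which is eventually among them), have densities summing
   to at most 1.  Letting [M] grow and using [sum_m i(x_n; L m) = 1] leaves nothing for [l]. *)

Definition eventually (Q : nat -> Prop) : Prop :=
  exists N, forall n, (N <= n)%nat -> Q n.

Lemma eventually_ge N : eventually (fun n => (N <= n)%nat).
Proof. now exists N. Qed.

Lemma eventually_and (P Q : nat -> Prop) :
  eventually P -> eventually Q -> eventually (fun n => P n /\ Q n).
Proof.
  intros [N1 H1] [N2 H2]. exists (max N1 N2). intros n Hn.
  split; [apply H1 | apply H2]; lia.
Qed.

Lemma eventually_mono (P Q : nat -> Prop) :
  (forall n, P n -> Q n) -> eventually P -> eventually Q.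
Proof. intros HPQ [N HN]. exists N. auto. Qed.

Lemma eventually_forall_le (Q : nat -> nat -> Prop) (M : nat) :
  (forall i, (i <= M)%nat -> eventually (Q i)) ->
  eventually (fun n => forall i, (i <= M)%nat -> Q i n).
Proof.
  induction M as [|M IH]; intros HQ.
  - apply (eventually_mono (Q 0%nat)); [|apply HQ; lia].
    intros n Hn i Hi. now replace i with 0%nat by lia.
  - apply (eventually_mono (fun n => (forall i, (i <= M)%nat -> Q i n) /\ Q (S M) n)).
    + intros n [Hle HS] i Hi. destruct (Nat.eq_dec i (S M)) as [->|]; [exact HS | apply Hle; lia].
    + apply eventually_and; [apply IH; auto | apply HQ; lia].
Qed.

Lemma eventually_div_le A eps : eps > 0 -> eventually (fun n => A / INR n <= eps).
Proof.
  intros Heps. destruct (INR_archimed eps A Heps) as [N HN].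
  exists (S N). intros n Hn.
  assert (HnN : INR N <= INR n) by (apply le_INR; lia).
  assert (Hn0 : 0 < INR n) by (apply lt_0_INR; lia).
  apply Rmult_le_reg_r with (INR n); [exact Hn0|].
  unfold Rdiv. rewrite Rmult_assoc, Rinv_l by lra.
  assert (INR N * eps <= INR n * eps) by (apply Rmult_le_compat_r; lra). lra.
Qed.

Definition asymp_ge (u : nat -> R) (c : R) : Prop :=
  forall eps, eps > 0 -> eventually (fun n => c - eps <= u n).

Lemma Rsup_lub (E : R -> Prop) : bound E -> (exists x, E x) -> is_lub E (Rsup E).
Proof.
  intros Hb Hne. unfold Rsup.
  destruct (excluded_middle_informative _) as [H|H].
  - exact (proj2_sig (completeness E (proj1 H) (proj2 H))).
  - exfalso. tauto.
Qed.

Lemma Rsup_ub (E : R -> Prop) b x : (forall y, E y -> y <= b) -> E x -> x <= Rsup E.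
Proof.
  intros Hb Hx. apply (Rsup_lub E (ex_intro _ b Hb) (ex_intro _ x Hx)). exact Hx.
Qed.

Lemma Rsup_le (E : R -> Prop) b : (exists x, E x) -> (forall y, E y -> y <= b) -> Rsup E <= b.
Proof. intros Hne Hb. now apply (Rsup_lub E (ex_intro _ b Hb) Hne). Qed.

Lemma Rsup_approx (E : R -> Prop) eps : bound E -> (exists x, E x) -> eps > 0 ->
  exists x, E x /\ Rsup E - eps < x.
Proof.
  intros Hb Hne Heps. apply NNPP. intros Hnone.
  assert (Rsup E <= Rsup E - eps); [|lra].
  apply (Rsup_lub E Hb Hne). intros y Hy.
  apply Rnot_lt_le. intros Hlt. apply Hnone. now exists y.
Qed.

Section Limsup.
Variables (u : nat -> R) (a b : R).
Hypothesis u_bounded : forall n, a <= u n <= b.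

Let tail_sup N := Rsup (fun y => exists n, (n >= N)%nat /\ y = u n).

Let tail_sup_ub N n : (n >= N)%nat -> u n <= tail_sup N.
Proof.
  intros Hn. apply Rsup_ub with b; [|now exists n].
  intros y [m [_ ->]]. apply u_bounded.
Qed.

Let tail_sup_le N c : (forall n, u n <= c) -> tail_sup N <= c.
Proof.
  intros Hc. apply Rsup_le; [exists (u N), N; split; [lia | reflexivity]|].
  now intros y [m [_ ->]].
Qed.

Let tails := fun y => exists N, - y = tail_sup N.

Let limsup_tails : limsup u = - Rsup tails.
Proof. reflexivity. Qed.

Let tails_ub y : tails y -> y <= - a.
Proof.
  intros [N HN]. pose proof (tail_sup_ub N N (le_n N)). pose proof (u_bounded N). lra.
Qed.

Let tails_ne : exists y, tails y.
Proof. exists (- tail_sup 0%nat), 0%nat. ring. Qed.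

Lemma limsup_eventually_le eps : eps > 0 -> eventually (fun n => u n <= limsup u + eps).
Proof.
  intros Heps.
  destruct (Rsup_approx tails eps (ex_intro _ _ tails_ub) tails_ne Heps) as [y [[N HN] Hy]].
  exists N. intros n Hn. rewrite limsup_tails. pose proof (tail_sup_ub N n Hn). lra.
Qed.

Lemma limsup_le c : (forall n, u n <= c) -> limsup u <= c.
Proof.
  intros Hc. rewrite limsup_tails.
  assert (- tail_sup 0%nat <= Rsup tails)
    by (apply Rsup_ub with (- a); [exact tails_ub | exists 0%nat; ring]).
  pose proof (tail_sup_le 0%nat c Hc). lra.
Qed.
End Limsup.

Lemma liminf_asymp_ge (u : nat -> R) a b :
  (forall n, a <= u n <= b) -> asymp_ge u (liminf u).
Proof.
  intros Hu eps Heps. unfold liminf.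
  apply (eventually_mono (fun n => - u n <= limsup (fun n => - u n) + eps)); [intros n; lra|].
  apply limsup_eventually_le with (- b) (- a); [intros n; specialize (Hu n); lra | exact Heps].
Qed.

Lemma liminf_ge (u : nat -> R) a b c :
  (forall n, a <= u n <= b) -> (forall n, c <= u n) -> c <= liminf u.
Proof.
  intros Hu Hc. unfold liminf.
  assert (limsup (fun n => - u n) <= - c); [|lra].
  apply limsup_le with (- b) (- a); intros n; specialize (Hu n); specialize (Hc n); lra.
Qed.

Lemma count_le (P : nat -> Prop) n : (count P n <= n)%nat.
Proof. induction n; simpl; [lia|]. destruct (excluded_middle_informative _); lia. Qed.

Lemma count_compl (P Q : nat -> Prop) n :
  (forall t, P t <-> ~ Q t) -> (count P n + count Q n)%nat = n.
Proof.
  intros HPQ. induction n; simpl; [lia|].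
  specialize (HPQ (S n)).
  destruct (excluded_middle_informative (P (S n))), (excluded_middle_informative (Q (S n)));
    tauto || lia.
Qed.

Lemma count_eventual_subset (P Q : nat -> Prop) N :
  (forall t, (N <= t)%nat -> P t -> Q t) -> forall n, (count P n <= count Q n + N)%nat.
Proof.
  intros HPQ n. induction n; simpl; [lia|].
  destruct (Compare_dec.le_lt_dec N (S n)) as [HN|HN].
  - specialize (HPQ (S n) HN).
    destruct (excluded_middle_informative (P (S n))), (excluded_middle_informative (Q (S n)));
      tauto || lia.
  - pose proof (count_le P n).
    destruct (excluded_middle_informative (P (S n))), (excluded_middle_informative (Q (S n))); lia.
Qed.

Lemma ratio_bounds (P : nat -> Prop) n : 0 <= ratio P n <= 1.
Proof.
  unfold ratio. destruct n as [|n].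
  - simpl. unfold Rdiv. rewrite Rmult_0_l. lra.
  - assert (Hn : 0 < INR (S n)) by (apply lt_0_INR; lia).
    assert (Hc : INR (count P (S n)) <= INR (S n)) by apply le_INR, count_le.
    pose proof (pos_INR (count P (S n))).
    unfold Rdiv. split.
    + apply Rmult_le_pos; [lra | left; apply Rinv_0_lt_compat; lra].
    + rewrite <- (Rinv_r (INR (S n))) by lra.
      apply Rmult_le_compat_r; [left; apply Rinv_0_lt_compat; lra | exact Hc].
Qed.

Lemma ratio_compl (P Q : nat -> Prop) n :
  (n >= 1)%nat -> (forall t, P t <-> ~ Q t) -> ratio P n = 1 - ratio Q n.
Proof.
  intros Hn HPQ. unfold ratio.
  assert (0 < INR n) by (apply lt_0_INR; lia).
  pose proof (f_equal INR (count_compl P Q n HPQ)) as Hsum. rewrite plus_INR in Hsum.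
  replace (INR (count P n)) with (INR n - INR (count Q n)) by lra.
  field. lra.
Qed.

Lemma delta_plus_le_1 (P : nat -> Prop) : delta_plus P <= 1.
Proof.
  apply limsup_le with 0 1; intros n; apply ratio_bounds.
Qed.

Lemma delta_minus_nonneg (P : nat -> Prop) : 0 <= delta_minus P.
Proof. apply liminf_ge with 0 1; intros n; apply ratio_bounds. Qed.

Lemma asymp_ge_ratio_eventual_subset (P Q : nat -> Prop) N c :
  (forall t, (N <= t)%nat -> P t -> Q t) -> asymp_ge (ratio P) c -> asymp_ge (ratio Q) c.
Proof.
  intros HPQ HP eps Heps.
  apply (eventually_mono
           (fun n => (1 <= n)%nat /\ (c - eps / 2 <= ratio P n /\ INR N / INR n <= eps / 2))).
  - intros n [Hn [HPn HNn]].
    assert (Hn0 : 0 < INR n) by (apply lt_0_INR; lia).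
    pose proof (le_INR _ _ (count_eventual_subset P Q N HPQ n)) as Hc. rewrite plus_INR in Hc.
    assert (ratio P n <= ratio Q n + INR N / INR n); [|lra].
    unfold ratio, Rdiv. rewrite <- Rmult_plus_distr_r.
    apply Rmult_le_compat_r; [left; apply Rinv_0_lt_compat|]; lra.
  - apply eventually_and; [apply eventually_ge|].
    apply eventually_and; [apply HP | apply eventually_div_le]; lra.
Qed.

Section DisjointFamily.
Variables (P : nat -> nat -> Prop) (M : nat).
Hypothesis P_disjoint :
  forall i j t, (i <= M)%nat -> (j <= M)%nat -> i <> j -> P i t -> P j t -> False.

Let indicator (Q : Prop) : R := if excluded_middle_informative Q then 1 else 0.

Let indicator_sum_disjoint t M' : (M' <= M)%nat ->
  sum_f_R0 (fun j => indicator (P j t)) M' = indicator (exists j, (j <= M')%nat /\ P j t).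
Proof.
  unfold indicator. induction M' as [|M' IH]; intros HM; simpl.
  - destruct (excluded_middle_informative (P 0%nat t)) as [H0|H0],
      (excluded_middle_informative (exists j, (j <= 0)%nat /\ P j t)) as [[j [Hj Hjt]]|Hex];
      try reflexivity.
    + exfalso. apply Hex. exists 0%nat. split; [lia | exact H0].
    + exfalso. apply H0. now replace j with 0%nat in Hjt by lia.
  - rewrite IH by lia.
    destruct (excluded_middle_informative (exists j, (j <= M')%nat /\ P j t)) as [[j [Hj Hjt]]|Hex],
      (excluded_middle_informative (P (S M') t)) as [HS|HS],
      (excluded_middle_informative (exists j, (j <= S M')%nat /\ P j t)) as [HexS|HexS].
    + exfalso. apply (P_disjoint j (S M') t); auto; lia.
    + exfalso. apply (P_disjoint j (S M') t); auto; lia.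
    + ring.
    + exfalso. apply HexS. exists j. split; [lia | exact Hjt].
    + ring.
    + exfalso. apply HexS. exists (S M'). split; [lia | exact HS].
    + exfalso. destruct HexS as [j [Hj Hjt]].
      destruct (Nat.eq_dec j (S M')) as [->|]; [tauto|].
      apply Hex. exists j. split; [lia | exact Hjt].
    + ring.
Qed.

Lemma sum_count_disjoint n :
  sum_f_R0 (fun j => INR (count (P j) n)) M
  = INR (count (fun t => exists j, (j <= M)%nat /\ P j t) n).
Proof.
  induction n as [|n IH]; simpl.
  - rewrite sum_cte. ring.
  - rewrite (sum_eq _ (fun j => INR (count (P j) n) + indicator (P j (S n)))).
    + rewrite plus_sum, IH, indicator_sum_disjoint by lia. unfold indicator.
      rewrite plus_INR. now destruct (excluded_middle_informative _).
    + intros j _. rewrite plus_INR. unfold indicator.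
      now destruct (excluded_middle_informative _).
Qed.

Lemma sum_ratio_disjoint_le_1 n : (n >= 1)%nat -> sum_f_R0 (fun j => ratio (P j) n) M <= 1.
Proof.
  intros Hn. pose proof (ratio_bounds (fun t => exists j, (j <= M)%nat /\ P j t) n) as Hr.
  unfold ratio, Rdiv in *. rewrite <- scal_sum, sum_count_disjoint. lra.
Qed.
End DisjointFamily.

Lemma sum_asymp_ge_le_1 (w : nat -> nat -> R) (c : nat -> R) M :
  (forall n, (n >= 1)%nat -> sum_f_R0 (fun j => w j n) M <= 1) ->
  (forall j, (j <= M)%nat -> asymp_ge (w j) (c j)) -> sum_f_R0 c M <= 1.
Proof.
  intros Hw Hc. apply Rle_plus_epsilon. intros e He.
  assert (HM : 0 < INR (S M)) by (apply lt_0_INR; lia).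
  set (eps := e / INR (S M)).
  assert (Heps : eps > 0) by (apply Rdiv_lt_0_compat; lra).
  pose proof (eventually_forall_le (fun j n => c j - eps <= w j n) M (fun j Hj => Hc j Hj eps Heps))
    as Hev.
  destruct (eventually_and _ _ (eventually_ge 1) Hev) as [N HN].
  destruct (HN N (le_n N)) as [HN1 HNw].
  assert (Hle : sum_f_R0 (fun j => c j - eps) M <= sum_f_R0 (fun j => w j N) M)
    by (apply sum_Rle; auto).
  pose proof (Hw N HN1). rewrite minus_sum, sum_cte in Hle.
  assert (eps * INR (S M) = e) by (unfold eps; field; lra). lra.
Qed.

(* [far T p] is the exceptional set in the definition of [idx x T] at tolerance [1/(p+1)]
   (resp. bound [p] or [-p]); [nbhd T p] is its complement. *)
Definition far (T : ExtR) (p : nat) (r : R) : Prop :=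
  match T with
  | Fin a => Rabs (r - a) >= / (INR p + 1)
  | PInf => r <= INR p
  | MInf => r >= - INR p
  end.

Definition nbhd (T : ExtR) (p : nat) (r : R) : Prop :=
  match T with
  | Fin a => Rabs (r - a) < / (INR p + 1)
  | PInf => INR p < r
  | MInf => r < - INR p
  end.

Lemma nbhd_iff_not_far T p r : nbhd T p r <-> ~ far T p r.
Proof. destruct T; simpl; split; intros; lra. Qed.

Lemma inv_INR_succ_pos p : 0 < / (INR p + 1).
Proof. apply Rinv_0_lt_compat. pose proof (pos_INR p). lra. Qed.

Lemma idx_le_far (x : nat -> R) T p : idx x T <= 1 - delta_plus (fun n => far T p (x n)).
Proof.
  assert (Hmem : forall S : R -> Prop, (forall d, S d -> d <= 1) ->
            S (delta_plus (fun n => far T p (x n))) ->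
            1 - Rsup S <= 1 - delta_plus (fun n => far T p (x n))).
  { intros S HS Hd. pose proof (Rsup_ub S 1 _ HS Hd). lra. }
  destruct T as [a| |]; apply Hmem.
  - intros d [e [_ ->]]. apply delta_plus_le_1.
  - exists (/ (INR p + 1)). split; [apply inv_INR_succ_pos | reflexivity].
  - intros d [M ->]. apply delta_plus_le_1.
  - now exists (INR p).
  - intros d [M ->]. apply delta_plus_le_1.
  - now exists (- INR p).
Qed.

Lemma idx_fin_nonneg (x : nat -> R) l : 0 <= idx x (Fin l).
Proof.
  simpl. assert (Rsup (fun d => exists eps, eps > 0 /\
                   d = delta_plus (fun n => Rabs (x n - l) >= eps)) <= 1); [|lra].
  apply Rsup_le.
  - exists (delta_plus (fun n => Rabs (x n - l) >= 1)), 1. split; [lra | reflexivity].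
  - intros d [e [_ ->]]. apply delta_plus_le_1.
Qed.

Lemma asymp_ge_ratio_nbhd (x : nat -> R) T p : asymp_ge (ratio (fun n => nbhd T p (x n))) (idx x T).
Proof.
  intros eps Heps.
  apply (eventually_mono (fun n => (1 <= n)%nat /\
           ratio (fun n => far T p (x n)) n <= delta_plus (fun n => far T p (x n)) + eps)).
  - intros n [Hn Hfar].
    rewrite (ratio_compl _ (fun n => far T p (x n)) n Hn (fun t => nbhd_iff_not_far T p (x t))).
    pose proof (idx_le_far x T p). lra.
  - apply eventually_and; [apply eventually_ge|].
    apply limsup_eventually_le with 0 1; [intros n; apply ratio_bounds | exact Heps].
Qed.

Lemma eventually_INR_gt A : eventually (fun p => A < INR p).
Proof.
  destruct (INR_archimed 1 A Rlt_0_1) as [N HN]. rewrite Rmult_1_r in HN.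
  exists N. intros p Hp. apply le_INR in Hp. lra.
Qed.

Lemma eventually_inv_INR_succ_lt d : d > 0 -> eventually (fun p => / (INR p + 1) < d).
Proof.
  intros Hd. apply (eventually_mono (fun p => / d < INR p)); [|apply eventually_INR_gt].
  intros p Hp. rewrite <- (Rinv_inv d). apply Rinv_lt_contravar; [|lra].
  apply Rmult_lt_0_compat; [apply Rinv_0_lt_compat | pose proof (pos_INR p)]; lra.
Qed.

Lemma inv_INR_succ_le_1 p : / (INR p + 1) <= 1.
Proof. pose proof (pos_INR p). rewrite <- Rinv_1. apply Rinv_le_contravar; lra. Qed.

Definition nbhd_disjoint (T T' : ExtR) (p : nat) : Prop :=
  forall r, nbhd T p r -> nbhd T' p r -> False.

Lemma eventually_nbhd_disjoint_fin_fin a b :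
  a <> b -> eventually (nbhd_disjoint (Fin a) (Fin b)).
Proof.
  intros Hab. assert (Hd : 0 < Rabs (a - b)) by (apply Rabs_pos_lt; lra).
  apply (eventually_mono (fun p => / (INR p + 1) < Rabs (a - b) / 2));
    [|apply eventually_inv_INR_succ_lt; lra].
  intros p Hp r Ha Hb. simpl in Ha, Hb. apply Rabs_def2 in Ha, Hb.
  unfold Rabs in Hp. destruct (Rcase_abs (a - b)); lra.
Qed.

Lemma eventually_nbhd_disjoint_fin_pinf a : eventually (nbhd_disjoint (Fin a) PInf).
Proof.
  apply (eventually_mono (fun p => a + 1 < INR p)); [|apply eventually_INR_gt].
  intros p Hp r Ha Hr. simpl in Ha, Hr. apply Rabs_def2 in Ha.
  pose proof (inv_INR_succ_le_1 p). lra.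
Qed.

Lemma eventually_nbhd_disjoint_fin_minf a : eventually (nbhd_disjoint (Fin a) MInf).
Proof.
  apply (eventually_mono (fun p => - a + 1 < INR p)); [|apply eventually_INR_gt].
  intros p Hp r Ha Hr. simpl in Ha, Hr. apply Rabs_def2 in Ha.
  pose proof (inv_INR_succ_le_1 p). lra.
Qed.

Lemma eventually_nbhd_disjoint_pinf_minf : eventually (nbhd_disjoint PInf MInf).
Proof. exists 0%nat. intros p _ r Hp Hm. simpl in Hp, Hm. pose proof (pos_INR p). lra. Qed.

Lemma eventually_nbhd_disjoint T T' : T <> T' -> eventually (nbhd_disjoint T T').
Proof.
  assert (sym : forall T T', eventually (nbhd_disjoint T T') -> eventually (nbhd_disjoint T' T)).
  { intros ? ?. apply eventually_mono. intros p Hp r H H'. exact (Hp r H' H). }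
  intros HTT'. destruct T as [a| |], T' as [b| |]; try congruence.
  - apply eventually_nbhd_disjoint_fin_fin. congruence.
  - apply eventually_nbhd_disjoint_fin_pinf.
  - apply eventually_nbhd_disjoint_fin_minf.
  - apply sym, eventually_nbhd_disjoint_fin_pinf.
  - apply eventually_nbhd_disjoint_pinf_minf.
  - apply sym, eventually_nbhd_disjoint_fin_minf.
  - apply sym, eventually_nbhd_disjoint_pinf_minf.
Qed.

Lemma eventually_nbhd_family_disjoint (F : nat -> ExtR) M :
  (forall i j, (i <= M)%nat -> (j <= M)%nat -> i <> j -> F i <> F j) ->
  eventually (fun p => forall i, (i <= M)%nat -> forall j, (j <= M)%nat -> i <> j ->
                        nbhd_disjoint (F i) (F j) p).
Proof.
  intros HF.
  apply (eventually_forall_le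
           (fun i p => forall j, (j <= M)%nat -> i <> j -> nbhd_disjoint (F i) (F j) p)).
  intros i Hi. apply (eventually_forall_le (fun j p => i <> j -> nbhd_disjoint (F i) (F j) p)).
  intros j Hj.
  destruct (Nat.eq_dec i j) as [->|Hij].
  - exists 0%nat. intros p _ Hjj. now contradiction Hjj.
  - apply (eventually_mono (nbhd_disjoint (F i) (F j))); [auto|].
    apply eventually_nbhd_disjoint, HF; assumption.
Qed.

Lemma infinite_sum_budget_nonpos (f : nat -> R) c :
  infinite_sum f 1 -> (forall M, c + sum_f_R0 f M <= 1) -> c <= 0.
Proof.
  intros Hf Hc. apply Rnot_gt_le. intros Hpos.
  destruct (Hf c Hpos) as [N HN]. specialize (HN N (le_n N)). specialize (Hc N).
  unfold Rdist in HN. apply Rabs_def2 in HN. lra.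
Qed.

Lemma strictly_increasing_from_1 (k : nat -> nat) :
  (forall n, (n >= 1)%nat -> (k n < k (S n))%nat) ->
  forall a b, (1 <= a)%nat -> (a < b)%nat -> (k a < k b)%nat.
Proof.
  intros Hk a b Ha Hab. induction b as [|b IH]; [lia|].
  destruct (Nat.eq_dec a b) as [->|Hne]; [apply Hk; lia|].
  specialize (IH ltac:(lia)). specialize (Hk b ltac:(lia)). lia.
Qed.

Lemma subsequence_image_cv (x : nat -> R) l (k : nat -> nat) :
  (forall n, (n >= 1)%nat -> (k n < k (S n))%nat) -> Un_cv (fun n => x (k n)) l ->
  forall eps, eps > 0 ->
    eventually (fun t => (exists n, (n >= 1)%nat /\ t = k n) -> Rabs (x t - l) < eps).
Proof.
  intros Hk Hcv eps Heps. destruct (Hcv eps Heps) as [N HN].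
  exists (k (max N 1)). intros t Ht [n [Hn ->]]. apply HN.
  destruct (Compare_dec.le_lt_dec (max N 1) n) as [|Hlt]; [lia|].
  pose proof (strictly_increasing_from_1 k Hk n (max N 1) Hn Hlt). lia.
Qed.

Section Budget.
Variables (x : nat -> R) (L : nat -> ExtR).
Hypothesis L_distinct : forall m m' : nat, (m >= 1)%nat -> (m' >= 1)%nat -> m <> m' -> L m <> L m'.
Hypothesis idx_sum_1 : infinite_sum (fun m => idx x (L (S m))) 1.
Variable l : R.
Hypothesis l_not_in_L : forall m : nat, (m >= 1)%nat -> L m <> Fin l.

Lemma idx_budget c0 :
  (forall p, exists Q : nat -> Prop,
     (forall t, Q t -> nbhd (Fin l) p (x t)) /\ asymp_ge (ratio Q) c0) ->
  forall M, c0 + sum_f_R0 (fun m => idx x (L (S m))) M <= 1.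
Proof.
  intros Hc0 M.
  set (F := fun j => match j with O => Fin l | S _ => L j end).
  assert (F_distinct : forall i j, (i <= S M)%nat -> (j <= S M)%nat -> i <> j -> F i <> F j).
  { intros [|i] [|j] Hi Hj Hij; simpl.
    - lia.
    - intros H. apply (l_not_in_L (S j)); [lia | now symmetry].
    - apply l_not_in_L. lia.
    - apply L_distinct; lia. }
  destruct (eventually_nbhd_family_disjoint F (S M) F_distinct) as [p Hp].
  specialize (Hp p (le_n p)).
  destruct (Hc0 p) as [Q [HQ HQc0]].
  set (P := fun j t => match j with O => Q t | S _ => nbhd (L j) p (x t) end).
  assert (HPF : forall j t, P j t -> nbhd (F j) p (x t)) by (intros [|j] t H; simpl in *; auto).
  pose proof (sum_asymp_ge_le_1 (fun j => ratio (P j))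
                (fun j => match j with O => c0 | S _ => idx x (L j) end) (S M)) as Hsum.
  rewrite decomp_sum in Hsum by lia. apply Hsum.
  - apply sum_ratio_disjoint_le_1.
    intros i j t Hi Hj Hij Hit Hjt. exact (Hp i Hi j Hj Hij (x t) (HPF i t Hit) (HPF j t Hjt)).
  - intros [|j] _; [exact HQc0 | apply asymp_ge_ratio_nbhd].
Qed.

Lemma idx_fin_eq_0 : idx x (Fin l) = 0.
Proof.
  apply Rle_antisym; [|apply idx_fin_nonneg].
  apply (infinite_sum_budget_nonpos _ _ idx_sum_1), idx_budget.
  intros p. exists (fun t => nbhd (Fin l) p (x t)). split; [auto | apply asymp_ge_ratio_nbhd].
Qed.

Lemma delta_minus_eq_0_of_cv_along (K : nat -> Prop) :
  (forall eps, eps > 0 -> eventually (fun t => K t -> Rabs (x t - l) < eps)) ->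
  delta_minus K = 0.
Proof.
  intros Hcv. apply Rle_antisym; [|apply delta_minus_nonneg].
  apply (infinite_sum_budget_nonpos _ _ idx_sum_1), idx_budget.
  intros p. exists (fun t => K t /\ nbhd (Fin l) p (x t)). split; [tauto|].
  destruct (Hcv _ (inv_INR_succ_pos p)) as [N HN].
  apply (asymp_ge_ratio_eventual_subset K _ N).
  { intros t Ht HK. split; [exact HK | exact (HN t Ht HK)]. }
  apply liminf_asymp_ge with 0 1. intros n. apply ratio_bounds.
Qed.
End Budget.

Theorem mainTheorem3 (x : nat -> R) (L : nat -> ExtR)
  (Hdist : forall m m' : nat, (m >= 1)%nat -> (m' >= 1)%nat -> m <> m' -> L m <> L m')
  (Hsum : infinite_sum (fun m => idx x (L (S m))) 1) :
  forall l : R, (forall m : nat, (m >= 1)%nat -> L m <> Fin l) ->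
    idx x (Fin l) = 0 /\
    (forall k : nat -> nat,
       (k 1 >= 1)%nat ->
       (forall n : nat, (n >= 1)%nat -> (k n < k (S n))%nat) ->
       Un_cv (fun n => x (k n)) l ->
       delta_minus (fun j => exists n : nat, (n >= 1)%nat /\ j = k n) = 0).
Proof.
  intros l Hl. split.
  - exact (idx_fin_eq_0 x L Hdist Hsum l Hl).
  - intros k _ Hk Hcv.
    exact (delta_minus_eq_0_of_cv_along x L Hdist Hsum l Hl _ (subsequence_image_cv x l k Hk Hcv)).
Qed.
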